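(* Let $(M,g)$ be a 4-dimensional Lorentzian manifold with Levi-Civita connection $\nabla$, and let $K_{kl}$ be a symmetric tensor with trace $K=K^p{}_p$ satisfying $$\nabla_jK_{kl}=\frac{5}{18}\nabla_jK\,g_{kl}-\frac1{18}\nabla_kK\,g_{jl}-\frac1{18}\nabla_lK\,g_{jk}.$$ Then (i) $\nabla^kK_{kl}=0$ and $K$ is a conformal Killing tensor in the sense $\nabla_jK_{kl}+\nabla_lK_{jk}+\nabla_kK_{lj}=\frac16(\nabla_jK\,g_{kl}+\nabla_lK\,g_{jk}+\nabla_kK\,g_{lj})$; (ii) $\mathscr C_{kl}=K_{kl}-\frac K3g_{kl}$ is a Codazzi tensor ($\nabla_j\mathscr C_{kl}=\nabla_k\mathscr C_{jl}$) and $K_{kl}=\mathscr C_{kl}-g_{kl}\mathscr C^p{}_p$. Consequently, if $T_{kl}$ is such that $R_{kl}-\frac12Rg_{kl}=T_{kl}+K_{kl}$, then $(g,T)$ is simultaneously a solution of conformal Killing gravity (Einstein equations sourced by $T$ plus a divergence-free conformal Killing tensor) and of Cotton gravity in Codazzi form ($R_{kl}-\frac12Rg_{kl}=T_{kl}+\mathscr C_{kl}-g_{kl}\mathscr C^p{}_p$ with $\mathscr C$ Codazzi).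
   Context: $R_{kl}$ and $R$ denote the Ricci tensor and scalar curvature of $g$. *)

(* local coordinate model of a 4-dimensional
   Lorentzian manifold on an open set U of R^4 = 'rV[R]_4. *)
From HB Require Import structures.
From mathcomp Require Import all_boot all_order all_algebra.
From mathcomp Require Import all_classical all_reals all_analysis.
Set Implicit Arguments. Unset Strict Implicit. Unset Printing Implicit Defensive.
Import Order.TTheory GRing.Theory Num.Theory.
Import numFieldNormedType.Exports.
Local Open Scope ring_scope.

Section Geom.
Variable R : realType.
Notation V := 'rV[R]_4.

Definition ebas (i : 'I_4) : V := delta_mx 0 i.

Definition pd (i : 'I_4) (f : V -> R) (x : V) : R := 'D_(ebas i) f x.

Definition ginv (g : V -> 'M[R]_4) (x : V) : 'M[R]_4 := invmx (g x).

Definition christoffel (g : V -> 'M[R]_4) (x : V) (i j k : 'I_4) : R :=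
  2^-1 * \sum_(l < 4) ginv g x i l *
    (pd j (fun y => g y l k) x + pd k (fun y => g y l j) x
     - pd l (fun y => g y j k) x).

Definition nabla2 (g : V -> 'M[R]_4) (K : V -> 'M[R]_4) (x : V)
  (j k l : 'I_4) : R :=
  pd j (fun y => K y k l) x
  - \sum_(p < 4) christoffel g x p j k * K x p l
  - \sum_(p < 4) christoffel g x p j l * K x k p.

Definition gtrace (g : V -> 'M[R]_4) (K : V -> 'M[R]_4) (x : V) : R :=
  \sum_(p < 4) \sum_(q < 4) ginv g x p q * K x p q.

Definition gdiv (g : V -> 'M[R]_4) (K : V -> 'M[R]_4) (x : V) (l : 'I_4) : R :=
  \sum_(j < 4) \sum_(k < 4) ginv g x j k * nabla2 g K x j k l.

(* Ricci tensor R_{bd} = R^a_{bad}, with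
   R^a_{bcd} = d_c Gamma^a_{db} - d_d Gamma^a_{cb}
               + Gamma^a_{ce} Gamma^e_{db} - Gamma^a_{de} Gamma^e_{cb} *)
Definition ricci (g : V -> 'M[R]_4) (x : V) : 'M[R]_4 :=
  \matrix_(b < 4, d < 4) \sum_(a < 4)
    (pd a (fun y => christoffel g y a d b) x
     - pd d (fun y => christoffel g y a a b) x
     + \sum_(e < 4) (christoffel g x a a e * christoffel g x e d b
                     - christoffel g x a d e * christoffel g x e a b)).

Definition scal_curv (g : V -> 'M[R]_4) (x : V) : R := gtrace g (ricci g) x.

Definition einstein (g : V -> 'M[R]_4) (x : V) : 'M[R]_4 :=
  ricci g x - (scal_curv g x / 2) *: g x.

Definition lorentzian_at (G : 'M[R]_4) : Prop :=
  G^T = G /\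
  exists P : 'M[R]_4, P \in unitmx /\
    P^T *m G *m P = diag_mx (\row_(i < 4) (if i == 0 :> nat then -1 else 1)).

End Geom.

(* Substituting the hypothesis for nabla K, every claim becomes linear algebra
   in the gradient dK of the trace.  Contracting with g^{jk} gives
   (5 - 1 - 4)/18 dK = 0, and the cyclic sum gives (5 - 1 - 1)/18 = 1/6.
   Since the metric is parallel, nabla C = nabla K - 1/3 dK (x) g, which equals
   -1/18 times the total symmetrisation of dK (x) g; a totally symmetric tensor
   is Codazzi.  Finally tr C = K - 4K/3 = -K/3, so C - (tr C) g = K. *)
From HB Require Import structures.
From mathcomp Require Import all_boot all_order all_algebra.
From mathcomp Require Import all_classical all_reals all_analysis.
From mathcomp Require Import ring lra.
Set Implicit Arguments.
Unset Strict Implicit.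
Unset Printing Implicit Defensive.
Import Order.TTheory GRing.Theory Num.Theory.
Import numFieldNormedType.Exports.
Local Open Scope ring_scope.

Section DerivableMatrix.
Variables (R : realType) (V : normedModType R).

Lemma derivable_big (I : Type) (r : seq I) (P : pred I) (F : I -> V -> R) x v :
  (forall i, P i -> derivable (F i) x v) ->
  derivable (fun y => \sum_(i <- r | P i) F i y) x v.
Proof.
move=> dF; elim: r => [|a r IH].
  under eq_fun do rewrite big_nil; exact: derivable_cst.
case Pa: (P a); under eq_fun do rewrite big_cons Pa; last exact: IH.
exact: derivableD (dF a Pa) IH.
Qed.

Lemma derivable_prod (I : Type) (r : seq I) (P : pred I) (F : I -> V -> R) x v :
  (forall i, P i -> derivable (F i) x v) ->
  derivable (fun y => \prod_(i <- r | P i) F i y) x v.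
Proof.
move=> dF; elim: r => [|a r IH].
  under eq_fun do rewrite big_nil; exact: derivable_cst.
case Pa: (P a); under eq_fun do rewrite big_cons Pa; last exact: IH.
exact: derivableM (dF a Pa) IH.
Qed.

Lemma derivable_det n (M : V -> 'M[R]_n) x v :
  (forall i j, derivable (fun y => M y i j) x v) ->
  derivable (fun y => \det (M y)) x v.
Proof.
move=> dM; apply: derivable_big => s _ /=.
apply: derivableM; first exact: derivable_cst.
by apply: derivable_prod => i _; exact: dM.
Qed.

Variables (n : nat) (M : V -> 'M[R]_n) (x v : V).
Hypothesis dM : forall i j, derivable (fun y => M y i j) x v.

Lemma derivable_adj i j : derivable (fun y => \adj (M y) i j) x v.
Proof.
under eq_fun do rewrite mxE /cofactor.
apply: derivableM; first exact: derivable_cst.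
apply: derivable_det => a b.
by under eq_fun do rewrite !mxE; exact: dM.
Qed.

Lemma derivable_invmx i j : (\forall y \near x, M y \in unitmx) ->
  derivable (fun y => invmx (M y) i j) x v.
Proof.
move=> Mu; have Mux : M x \in unitmx by exact: nbhs_singleton Mu.
have d : derivable (fun y => (\det (M y))^-1 * \adj (M y) i j) x v.
  apply: derivableM; last exact: derivable_adj.
  by apply: derivableV; [rewrite -unitfE -unitmxE | exact: derivable_det].
apply: near_eq_derivable d; near=> y.
have Muy : M y \in unitmx by exact: (near Mu y).
by rewrite /invmx Muy [RHS]mxE.
Unshelve. all: by end_near. Qed.

End DerivableMatrix.

Lemma sum_mulrBr (R : comNzRingType) n (c a b : 'I_n -> R) (t : R) :
  \sum_p c p * (a p - t * b p) = \sum_p c p * a p - t * \sum_p c p * b p.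
Proof. by rewrite mulr_sumr -sumrB; apply: eq_bigr => p _; ring. Qed.

Section SymmetricInverse.
Variables (R : fieldType) (n : nat) (G : 'M[R]_n).
Hypotheses (Gu : G \in unitmx) (Gs : G^T = G).

Lemma invmx_sym i j : invmx G i j = invmx G j i.
Proof. by rewrite -{1}Gs -trmx_inv mxE. Qed.

Lemma sum_invmx_mul m l : \sum_p invmx G m p * G p l = (1%:M : 'M[R]_n) m l.
Proof. by rewrite -(mulVmx Gu) mxE. Qed.

Lemma sum_delta (F : 'I_n -> R) l : \sum_j F j * (1%:M : 'M[R]_n) j l = F l.
Proof.
rewrite (bigD1 l) //= big1 ?addr0 ?mxE ?eqxx ?mulr1 // => j /negbTE jl.
by rewrite mxE jl mulr0.
Qed.

Lemma trace_invmx_mul : \sum_p \sum_q invmx G p q * G p q = n%:R.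
Proof.
rewrite -(mxtrace1 R n) /mxtrace -(mulVmx Gu); apply: eq_bigr => p _.
by rewrite mxE; apply: eq_bigr => q _; rewrite -{2}Gs mxE.
Qed.

Lemma lower_index_invmx (A : 'I_n -> R) l :
  \sum_p (2^-1 * \sum_m invmx G p m * A m) * G p l = 2^-1 * A l.
Proof.
transitivity (2^-1 * \sum_m A m * \sum_p invmx G m p * G p l).
  under eq_bigr do rewrite -mulrA mulr_suml.
  rewrite -mulr_sumr exchange_big /=; congr (_ * _).
  apply: eq_bigr => m _; rewrite mulr_sumr; apply: eq_bigr => p _.
  rewrite invmx_sym; ring.
by under eq_bigr do rewrite sum_invmx_mul; rewrite sum_delta.
Qed.

End SymmetricInverse.

Lemma lorentzian_sym (R : realType) (G : 'M[R]_4) : lorentzian_at G -> G^T = G.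
Proof. by case. Qed.

Lemma lorentzian_unitmx (R : realType) (G : 'M[R]_4) :
  lorentzian_at G -> G \in unitmx.
Proof.
move=> [_ [P [_ eP]]].
have : \det (P^T *m G *m P) != 0.
  rewrite eP det_diag !big_ord_recr big_ord0 /= !mxE /=.
  by rewrite !mul1r !mulr1 oppr_eq0 oner_eq0.
rewrite !det_mulmx unitmxE unitfE; apply: contraNneq => ->.
by rewrite mulr0 mul0r.
Qed.

Section CovariantDerivative.
Variable R : realType.
Notation V := 'rV[R]_4.
Implicit Types (g K G : V -> 'M[R]_4) (f : V -> R) (x : V).

Lemma derivable_gtrace g K x v :
  (\forall y \near x, g y \in unitmx) ->
  (forall i j, derivable (fun y => g y i j) x v) ->
  (forall i j, derivable (fun y => K y i j) x v) ->
  derivable (gtrace g K) x v.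
Proof.
move=> gu dg dK; apply: derivable_big => p _; apply: derivable_big => q _.
by apply: derivableM; [exact: derivable_invmx | exact: dK].
Qed.

Lemma pd_sym g x m a b : (\forall y \near x, (g y)^T = g y) ->
  pd m (fun y => g y a b) x = pd m (fun y => g y b a) x.
Proof.
move=> gs; apply: near_eq_derive; near=> y.
have gsy : (g y)^T = g y by exact: (near gs y).
by rewrite -{1}gsy mxE.
Unshelve. all: by end_near. Qed.

Lemma nabla2_subZ g K f G x j k l :
  derivable (fun y => K y k l) x (ebas R j) -> derivable f x (ebas R j) ->
  derivable (fun y => G y k l) x (ebas R j) ->
  nabla2 g (fun y => K y - f y *: G y) x j k l =
  nabla2 g K x j k l - f x * nabla2 g G x j k l - pd j f x * G x k l.
Proof.
move=> dK df dG; rewrite /nabla2.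
have -> : pd j (fun y => (K y - f y *: G y) k l) x =
    pd j (fun y => K y k l) x
    - (f x * pd j (fun y => G y k l) x + G x k l * pd j f x).
  rewrite /pd; under eq_fun do rewrite !mxE.
  have -> : (fun y => K y k l - f y * G y k l) =
    (fun y => K y k l) - (f * (fun y => G y k l)) by [].
  by rewrite (deriveB dK (derivableM df dG)) (deriveM df dG).
under eq_bigr do rewrite !mxE.
under [X in _ - _ - X]eq_bigr do rewrite !mxE.
rewrite !sum_mulrBr; ring.
Qed.

Lemma nabla2_metric g x j k l : g x \in unitmx -> (g x)^T = g x ->
  (forall m a b, pd m (fun y => g y a b) x = pd m (fun y => g y b a) x) ->
  nabla2 g g x j k l = 0.
Proof.
move=> gu gs dgs; rewrite /nabla2 /christoffel /ginv.
have gsym a b : g x a b = g x b a by rewrite -{1}gs mxE.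
under [X in _ - _ - X]eq_bigr do rewrite (gsym k).
by rewrite !(lower_index_invmx gu gs) (dgs j l k) (dgs k l j) (dgs l k j); field.
Qed.

End CovariantDerivative.

Section TraceGradientForm.
Variables (R : realType) (g K : 'rV[R]_4 -> 'M[R]_4) (x : 'rV[R]_4).
Hypotheses (gu : g x \in unitmx) (gs : (g x)^T = g x).
Let dK j := pd j (gtrace g K) x.
Hypothesis nablaK : forall j k l, nabla2 g K x j k l =
  5 / 18 * dK j * g x k l - 1 / 18 * dK k * g x j l - 1 / 18 * dK l * g x j k.

Let gsym a b : g x a b = g x b a.
Proof. by rewrite -{1}gs mxE. Qed.

Lemma gdiv_trace_gradient_form l : gdiv g K x l = 0.
Proof.
rewrite /gdiv /ginv.
transitivity (\sum_j \sum_k (5/18 * dK j * (invmx (g x) j k * g x k l)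
   - 1/18 * dK k * (invmx (g x) k j * g x j l)
   - 1/18 * dK l * (invmx (g x) j k * g x j k))).
  apply: eq_bigr => j _; apply: eq_bigr => k _.
  rewrite nablaK (invmx_sym gs k j); ring.
have contr m : \sum_p invmx (g x) m p * g x p l = (1%:M : 'M[R]_4) m l.
  exact: sum_invmx_mul.
under eq_bigr do rewrite !sumrB -!mulr_sumr.
rewrite !sumrB [X in _ - X - _]exchange_big /=.
under eq_bigr do rewrite contr.
under [X in _ - X - _]eq_bigr do rewrite -mulr_sumr contr.
by rewrite -mulr_sumr (trace_invmx_mul gu gs) !sum_delta; field.
Qed.

Lemma nabla2_cyclic_trace_gradient_form j k l :
  nabla2 g K x j k l + nabla2 g K x l j k + nabla2 g K x k l j =
  6^-1 * (dK j * g x k l + dK l * g x j k + dK k * g x l j).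
Proof. by rewrite !nablaK (gsym j l) (gsym l k) (gsym k j); field. Qed.

Lemma gtrace_sub_third_trace :
  gtrace g (fun y => K y - (gtrace g K y / 3) *: g y) x = - (gtrace g K x / 3).
Proof.
rewrite /gtrace /ginv.
under eq_bigr do under eq_bigr do rewrite !mxE.
under eq_bigr do rewrite sum_mulrBr.
by rewrite sumrB -mulr_sumr (trace_invmx_mul gu gs); field.
Qed.

Lemma sub_third_trace_sub_trace :
  let C := fun y => K y - (gtrace g K y / 3) *: g y in
  K x = C x - gtrace g C x *: g x.
Proof.
by apply/matrixP => i j; rewrite gtrace_sub_third_trace !mxE; field.
Qed.

Hypotheses (dgs : forall m a b,
  pd m (fun y => g y a b) x = pd m (fun y => g y b a) x)
  (dgx : forall m i j, derivable (fun y => g y i j) x (ebas R m))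
  (dKx : forall m i j, derivable (fun y => K y i j) x (ebas R m))
  (dtrK : forall m, derivable (gtrace g K) x (ebas R m)).

Lemma nabla2_sub_third_trace m k l :
  nabla2 g (fun y => K y - (gtrace g K y / 3) *: g y) x m k l =
  - (1/18) * (dK m * g x k l + dK k * g x m l + dK l * g x m k).
Proof.
have d3 : derivable (fun y => gtrace g K y / 3) x (ebas R m).
  by apply: derivableM; [exact: dtrK | exact: derivable_cst].
rewrite nabla2_subZ // nabla2_metric // nablaK.
have -> : pd m (fun y => gtrace g K y / 3) x = dK m / 3.
  rewrite /pd (deriveM (@dtrK m) (derivable_cst (3^-1 : R) x _)) derive_cst.
  by rewrite /dK /pd /GRing.scale /=; ring.
by field.
Qed.

Lemma codazzi_sub_third_trace j k l :
  let C := fun y => K y - (gtrace g K y / 3) *: g y in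
  nabla2 g C x j k l = nabla2 g C x k j l.
Proof.
by rewrite /= !nabla2_sub_third_trace (gsym j l) (gsym k l) (gsym j k); ring.
Qed.

End TraceGradientForm.

Theorem mainTheorem9 (R : realType) (U : set 'rV[R]_4)
  (g : 'rV[R]_4 -> 'M[R]_4) (K : 'rV[R]_4 -> 'M[R]_4) :
  open U ->
  (forall x, U x -> lorentzian_at (g x)) ->
  (forall x, U x -> forall i j : 'I_4,
     differentiable (fun y => g y i j) x) ->
  (forall x, U x -> forall i j k : 'I_4,
     differentiable (fun y => pd k (fun z => g z i j) y) x) ->
  (forall x, U x -> (K x)^T = K x) ->
  (forall x, U x -> forall i j : 'I_4,
     differentiable (fun y => K y i j) x) ->
  (forall x, U x -> forall j k l : 'I_4,
     nabla2 g K x j k l =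
       5 / 18 * pd j (gtrace g K) x * g x k l
       - 1 / 18 * pd k (gtrace g K) x * g x j l
       - 1 / 18 * pd l (gtrace g K) x * g x j k) ->
  let C := fun y => K y - (gtrace g K y / 3) *: g y in
  (* (i) *)
  (forall x, U x -> forall l : 'I_4, gdiv g K x l = 0) /\
  (forall x, U x -> forall j k l : 'I_4,
     nabla2 g K x j k l + nabla2 g K x l j k + nabla2 g K x k l j =
       6^-1 * (pd j (gtrace g K) x * g x k l + pd l (gtrace g K) x * g x j k
               + pd k (gtrace g K) x * g x l j)) /\
  (* (ii) *)
  (forall x, U x -> forall j k l : 'I_4,
     nabla2 g C x j k l = nabla2 g C x k j l) /\
  (forall x, U x -> K x = C x - gtrace g C x *: g x) /\
  (* consequence: both gravity forms *)
  (forall T : 'rV[R]_4 -> 'M[R]_4,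
     (forall x, U x -> einstein g x = T x + K x) ->
     (forall x, U x -> einstein g x = T x + (C x - gtrace g C x *: g x))).
Proof.
move=> oU lor dg _ _ dK nablaK C.
have gu x : U x -> g x \in unitmx by move/lor/lorentzian_unitmx.
have gs x : U x -> (g x)^T = g x by move/lor/lorentzian_sym.
have nearU x : U x -> \forall y \near x, U y by move=> Ux; exact: open_nbhs_nbhs.
have dgx x : U x -> forall m i j, derivable (fun y => g y i j) x (ebas R m).
  by move=> Ux m i j; apply: diff_derivable; exact: dg.
have dKx x : U x -> forall m i j, derivable (fun y => K y i j) x (ebas R m).
  by move=> Ux m i j; apply: diff_derivable; exact: dK.
have KC x : U x -> K x = C x - gtrace g C x *: g x.
  by move=> Ux; apply: sub_third_trace_sub_trace; auto.
split; first by move=> x Ux; apply: gdiv_trace_gradient_form; auto.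
split; first by move=> x Ux; apply: nabla2_cyclic_trace_gradient_form; auto.
split; last by split=> // T hT x Ux; rewrite hT // -KC.
move=> x Ux; apply: codazzi_sub_third_trace; auto.
- by move=> m a b; apply: pd_sym; near=> y; apply: gs; near: y; exact: nearU.
- move=> m; apply: derivable_gtrace; auto.
  by near=> y; apply: gu; near: y; exact: nearU.
Unshelve. all: by end_near. Qed.
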